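(* Let $0<a_1\le a_2$ and $q\ge 2$. Let $e_1,e_2,\ldots$ be a sequence of non-negative integers with $$a_1 q^n/n \le e_n \le a_2 q^n/n\quad\text{for all } n\ge1,$$ and define $d_0=1,d_1,d_2,\ldots$ by the formal power series identity $\sum_{n\ge0} d_n x^n = \prod_{n\ge1}(1-x^n)^{-e_n}$. Then there exist constants $A_1$ depending only on $a_1$ and $A_2$ depending only on $a_2$ such that for all $n\ge 0$, $$(n+1)^{A_1}q^n \le d_n \le (n+1)^{A_2}q^n.$$ *)

From Stdlib Require Import Reals Arith List.
Open Scope R_scope.

Fixpoint binom (n k : nat) : nat :=
  match n, k with
  | _, O => 1
  | O, S _ => 0
  | S n', S k' => (binom n' k' + binom n' (S k'))%nat
  end.

(* Coefficient of x^(k*j) in (1 - x^k)^(-e), namely C(e+j-1, j)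
   (with truncated subtraction this also gives the right value for e = 0). *)
Definition negbin_coef (e j : nat) : nat := binom (e + j - 1) j.

(* partial_prod e m n = coefficient of x^n in  prod_{k=1}^m (1 - x^k)^(-e k). *)
Fixpoint partial_prod (e : nat -> nat) (m n : nat) : nat :=
  match m with
  | O => if Nat.eqb n 0 then 1%nat else 0%nat
  | S m' =>
      list_sum (map (fun j =>
        if Nat.leb (S m' * j) n
        then (negbin_coef (e (S m')) j * partial_prod e m' (n - S m' * j))%nat
        else 0%nat) (seq 0 (S n)))
  end.

(* d_n = coefficient of x^n in prod_{k>=1} (1 - x^k)^(-e_k); factors with
   k > n do not contribute to x^n, so it equals partial_prod e n n. *)
Definition dcoef (e : nat -> nat) (n : nat) : nat := partial_prod e n n.

From Stdlib Require Import Reals Arith List Lra Lia.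
Open Scope R_scope.

(* The lower bound is crude: d_n >= e_n, since the monomial x^n of the factor
   (1 - x^n)^(-e_n) alone already contributes e_n to d_n, and
   a1 / n >= (n + 1)^(A1) once A1 <= log2 (min a1 1) - 1.
   For the upper bound, evaluate at x = 1/q: the coefficients are nonnegative, so
   d_n x^n <= prod_k (1 - x^k)^(-e_k) <= exp (sum_k e_k x^k / (1 - x^k)), and with
   e_k <= a2 q^k / k each summand is at most 2 a2 / k <= 4 a2 (ln (k + 1) - ln k);
   the sum telescopes to 4 a2 ln (n + 1). *)

Lemma binom_gt (n k : nat) : (n < k)%nat -> binom n k = 0%nat.
Proof.
  revert k; induction n as [|n IH]; intros [|k] Hnk; simpl; try lia; try reflexivity.
  rewrite !IH; lia.
Qed.

Lemma binom_1 (n : nat) : binom n 1 = n.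
Proof. induction n as [|n IH]; simpl; [reflexivity|]. rewrite IH; destruct n; reflexivity. Qed.

Lemma negbin_coef_0 (e : nat) : negbin_coef e 0 = 1%nat.
Proof. unfold negbin_coef; destruct (e + 0 - 1)%nat; reflexivity. Qed.

Lemma negbin_coef_1 (e : nat) : negbin_coef e 1 = e.
Proof. unfold negbin_coef. replace (e + 1 - 1)%nat with e by lia. apply binom_1. Qed.

Lemma negbin_coef_0_S (j : nat) : negbin_coef 0 (S j) = 0%nat.
Proof. apply binom_gt. lia. Qed.

Lemma negbin_coef_SS (e j : nat) :
  negbin_coef (S e) (S j) = (negbin_coef e (S j) + negbin_coef (S e) j)%nat.
Proof.
  unfold negbin_coef.
  replace (S e + S j - 1)%nat with (S (e + j)) by lia.
  replace (e + S j - 1)%nat with (e + j)%nat by lia.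
  replace (S e + j - 1)%nat with (e + j)%nat by lia.
  apply Nat.add_comm.
Qed.

Definition negbin_partial_sum (e : nat) (y : R) (J : nat) : R :=
  sum_f_R0 (fun j => INR (negbin_coef e j) * y ^ j) J.

Lemma negbin_partial_sum_0 (y : R) (J : nat) : negbin_partial_sum 0 y J = 1.
Proof.
  unfold negbin_partial_sum; induction J as [|J IH]; cbn [sum_f_R0].
  - rewrite negbin_coef_0; simpl; ring.
  - rewrite IH, negbin_coef_0_S; simpl; ring.
Qed.

Lemma negbin_partial_sum_le_S (e : nat) (y : R) (J : nat) :
  0 <= y -> negbin_partial_sum e y J <= negbin_partial_sum e y (S J).
Proof.
  intros Hy. unfold negbin_partial_sum. rewrite tech5.
  assert (0 <= INR (negbin_coef e (S J)) * y ^ S J)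
    by (apply Rmult_le_pos; [apply pos_INR | apply pow_le; exact Hy]).
  lra.
Qed.

(* Truncation of (1 - y)^(-e-1) = (1 - y)^(-e) + y (1 - y)^(-e-1). *)
Lemma negbin_partial_sum_SS (e : nat) (y : R) (J : nat) :
  negbin_partial_sum (S e) y (S J) =
  negbin_partial_sum e y (S J) + y * negbin_partial_sum (S e) y J.
Proof.
  unfold negbin_partial_sum.
  rewrite !(decomp_sum _ (S J)) by lia. simpl pred.
  rewrite !negbin_coef_0, scal_sum.
  erewrite sum_eq.
  2: { intros i _. rewrite negbin_coef_SS, plus_INR, Rmult_plus_distr_r.
       rewrite <- tech_pow_Rmult at 2. reflexivity. }
  rewrite plus_sum, Rplus_assoc.
  do 2 f_equal; apply sum_eq; intros i _; ring.
Qed.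

Lemma negbin_partial_sum_S_mul_le (e : nat) (y : R) (J : nat) :
  0 <= y -> negbin_partial_sum (S e) y J * (1 - y) <= negbin_partial_sum e y J.
Proof.
  intros Hy. destruct J as [|J].
  - unfold negbin_partial_sum; cbn [sum_f_R0]. rewrite !negbin_coef_0. simpl. lra.
  - pose proof (negbin_partial_sum_le_S (S e) y J Hy) as Hmono.
    rewrite negbin_partial_sum_SS in *. nra.
Qed.

Lemma negbin_partial_sum_le_inv_pow (e : nat) (y : R) (J : nat) :
  0 <= y < 1 -> negbin_partial_sum e y J <= / (1 - y) ^ e.
Proof.
  intros Hy. induction e as [|e IH].
  - rewrite negbin_partial_sum_0. simpl. lra.
  - pose proof (negbin_partial_sum_S_mul_le e y J (proj1 Hy)) as Hstep.
    simpl (_ ^ S e). rewrite Rinv_mult.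
    apply Rmult_le_reg_r with (1 - y); [lra|].
    rewrite (Rmult_comm (/ (1 - y))), Rmult_assoc, Rinv_l, Rmult_1_r by lra.
    lra.
Qed.

Lemma inv_pow_le_exp (e : nat) (y : R) :
  0 <= y < 1 -> / (1 - y) ^ e <= exp (INR e * (y / (1 - y))).
Proof.
  intros Hy. induction e as [|e IH].
  - simpl. rewrite Rmult_0_l, exp_0. lra.
  - rewrite S_INR, Rmult_plus_distr_r, Rmult_1_l, exp_plus.
    simpl (_ ^ S e). rewrite Rinv_mult, Rmult_comm.
    assert (Hinv : / (1 - y) = 1 + y / (1 - y)) by (field; lra).
    pose proof (exp_ineq1_le (y / (1 - y))) as Hexp.
    apply Rmult_le_compat; try lra.
    + apply Rlt_le, Rinv_0_lt_compat, pow_lt; lra.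
    + left; apply Rinv_0_lt_compat; lra.
Qed.

Lemma exp_le_compat (u v : R) : u <= v -> exp u <= exp v.
Proof. intros [Hlt|Heq]; [left; apply exp_increasing; exact Hlt | rewrite Heq; lra]. Qed.

Lemma negbin_partial_sum_le_exp (e : nat) (y : R) (J : nat) :
  0 <= y < 1 -> negbin_partial_sum e y J <= exp (INR e * (y / (1 - y))).
Proof.
  intros Hy. eapply Rle_trans;
    [apply negbin_partial_sum_le_inv_pow | apply inv_pow_le_exp]; exact Hy.
Qed.

Lemma INR_list_sum_seq (f : nat -> nat) (J : nat) :
  INR (list_sum (map f (seq 0 (S J)))) = sum_f_R0 (fun j => INR (f j)) J.
Proof.
  induction J as [|J IH]; [simpl; f_equal; lia|].
  rewrite seq_S, map_app, list_sum_app, plus_INR, IH. simpl. f_equal. f_equal. lia.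
Qed.

(* [log_prod_bound e x m] bounds the logarithm of prod_{k=1}^m (1 - x^k)^(-e k),
   since -ln (1 - t) <= t / (1 - t). *)
Fixpoint log_prod_bound (e : nat -> nat) (x : R) (m : nat) : R :=
  match m with
  | O => 0
  | S m' => log_prod_bound e x m' + INR (e (S m')) * (x ^ S m' / (1 - x ^ S m'))
  end.

Lemma partial_prod_mul_pow_le (e : nat -> nat) (x : R) : 0 <= x < 1 ->
  forall m n, INR (partial_prod e m n) * x ^ n <= exp (log_prod_bound e x m).
Proof.
  intros Hx. induction m as [|m IH]; intros n.
  - simpl. rewrite exp_0. destruct n; simpl; lra.
  - set (y := x ^ S m).
    assert (Hy : 0 <= y < 1) by (apply pow_lt_1_compat; [exact Hx | lia]).
    assert (Hbound : 0 < exp (log_prod_bound e x m)) by apply exp_pos.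
    apply Rle_trans with (negbin_partial_sum (e (S m)) y n * exp (log_prod_bound e x m)).
    + cbn [partial_prod]. rewrite INR_list_sum_seq, Rmult_comm, scal_sum.
      unfold negbin_partial_sum. rewrite (Rmult_comm (sum_f_R0 _ _)), scal_sum.
      apply sum_Rle. intros j _.
      assert (Hcoef : 0 <= INR (negbin_coef (e (S m)) j) * y ^ j)
        by (apply Rmult_le_pos; [apply pos_INR | apply pow_le; lra]).
      destruct (Nat.leb_spec (S m * j) n) as [Hle|Hgt].
      * replace (x ^ n) with (y ^ j * x ^ (n - S m * j)%nat)
          by (unfold y; rewrite <- pow_mult, <- pow_add; f_equal; lia).
        rewrite mult_INR.
        specialize (IH (n - S m * j)%nat).
        replace (INR (negbin_coef (e (S m)) j) * INR (partial_prod e m (n - S m * j))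
                 * (y ^ j * x ^ (n - S m * j)))
          with ((INR (negbin_coef (e (S m)) j) * y ^ j)
                * (INR (partial_prod e m (n - S m * j)) * x ^ (n - S m * j))) by ring.
        apply Rmult_le_compat_l; assumption.
      * simpl. rewrite Rmult_0_l. apply Rmult_le_pos; lra.
    + cbn [log_prod_bound]. rewrite exp_plus, Rmult_comm.
      apply Rmult_le_compat_l; [lra|].
      apply negbin_partial_sum_le_exp; exact Hy.
Qed.

Lemma inv_succ_le_ln_succ_sub (k : R) : 0 < k -> / (k + 1) <= ln (k + 1) - ln k.
Proof.
  intros Hk.
  pose proof (exp_ineq1_le (ln k - ln (k + 1))) as Hexp.
  unfold Rminus in Hexp. rewrite exp_plus, exp_Ropp, !exp_ln in Hexp by lra.
  replace (k * / (k + 1)) with (1 - / (k + 1)) in Hexp by (field; lra).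
  lra.
Qed.

Lemma geometric_weight_le (a2 q : R) (k : nat) (ek : R) :
  0 <= a2 -> 2 <= q -> (1 <= k)%nat -> ek <= a2 * q ^ k / INR k ->
  ek * ((/ q) ^ k / (1 - (/ q) ^ k)) <= 2 * a2 / INR k.
Proof.
  intros Ha2 Hq Hk Hek.
  assert (HQ : 2 <= q ^ k)
    by (apply Rle_trans with (q ^ 1); [simpl; lra | apply Rle_pow; [lra | exact Hk]]).
  assert (HkR : 1 <= INR k) by (apply (le_INR 1); exact Hk).
  rewrite pow_inv.
  replace (/ q ^ k / (1 - / q ^ k)) with (/ (q ^ k - 1)) by (field; lra).
  apply Rle_trans with (a2 * q ^ k / INR k * / (q ^ k - 1)).
  - apply Rmult_le_compat_r; [left; apply Rinv_0_lt_compat; lra | exact Hek].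
  - replace (a2 * q ^ k / INR k * / (q ^ k - 1))
      with (a2 / INR k * (q ^ k / (q ^ k - 1))) by (field; lra).
    replace (2 * a2 / INR k) with (a2 / INR k * 2) by (field; lra).
    apply Rmult_le_compat_l; [apply Rmult_le_pos; [lra | left; apply Rinv_0_lt_compat; lra]|].
    apply Rmult_le_reg_r with (q ^ k - 1); [lra|].
    unfold Rdiv; rewrite Rmult_assoc, Rinv_l by lra. lra.
Qed.

Lemma log_prod_bound_le (e : nat -> nat) (a2 q : R) :
  0 <= a2 -> 2 <= q ->
  (forall k : nat, (1 <= k)%nat -> INR (e k) <= a2 * q ^ k / INR k) ->
  forall m, log_prod_bound e (/ q) m <= 4 * a2 * ln (INR m + 1).
Proof.
  intros Ha2 Hq He. induction m as [|m IH].
  - simpl. rewrite Rplus_0_l, ln_1. lra.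
  - cbn [log_prod_bound]. rewrite S_INR.
    pose proof (geometric_weight_le a2 q (S m) _ Ha2 Hq ltac:(lia) (He (S m) ltac:(lia)))
      as Hterm.
    rewrite S_INR in Hterm.
    pose proof (pos_INR m) as Hm.
    pose proof (inv_succ_le_ln_succ_sub (INR m + 1) ltac:(lra)) as Hln.
    assert (Hhalf : 2 * a2 / (INR m + 1) <= 4 * a2 * / (INR m + 1 + 1)).
    { replace (2 * a2 / (INR m + 1)) with (4 * a2 * / (2 * (INR m + 1))) by (field; lra).
      apply Rmult_le_compat_l; [lra|]. apply Rinv_le_contravar; lra. }
    nra.
Qed.

Lemma dcoef_upper_bound (e : nat -> nat) (a2 q : R) :
  0 <= a2 -> 2 <= q ->
  (forall k : nat, (1 <= k)%nat -> INR (e k) <= a2 * q ^ k / INR k) ->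
  forall n, INR (dcoef e n) <= Rpower (INR n + 1) (4 * a2) * q ^ n.
Proof.
  intros Ha2 Hq He n.
  assert (Hx : 0 <= / q < 1)
    by (split; [left; apply Rinv_0_lt_compat | rewrite <- Rinv_1; apply Rinv_lt_contravar]; lra).
  assert (Hqn : 0 < q ^ n) by (apply pow_lt; lra).
  pose proof (partial_prod_mul_pow_le e (/ q) Hx n n) as Hprod.
  pose proof (log_prod_bound_le e a2 q Ha2 Hq He n) as Hlog.
  rewrite pow_inv in Hprod.
  unfold Rpower.
  apply Rmult_le_reg_r with (/ q ^ n); [apply Rinv_0_lt_compat; exact Hqn|].
  rewrite Rmult_assoc, Rinv_r, Rmult_1_r by lra.
  apply Rle_trans with (1 := Hprod). apply exp_le_compat. exact Hlog.
Qed.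

Lemma partial_prod_0 (e : nat -> nat) (m : nat) : partial_prod e m 0 = 1%nat.
Proof.
  induction m as [|m IH]; [reflexivity|].
  simpl. rewrite negbin_coef_0, Nat.mul_0_r, IH. reflexivity.
Qed.

Lemma e_le_dcoef (e : nat -> nat) (n : nat) : (1 <= n)%nat -> (e n <= dcoef e n)%nat.
Proof.
  intros Hn. destruct n as [|m]; [lia|]. unfold dcoef. cbn [partial_prod].
  simpl seq; simpl map.
  rewrite Nat.mul_1_r, Nat.leb_refl, Nat.sub_diag, partial_prod_0, negbin_coef_1.
  cbn [list_sum fold_right]. lia.
Qed.

Lemma Rpower_le_log2_exponent (c t : R) :
  0 < c <= 1 -> 2 <= t -> Rpower t (ln c / ln 2) <= c.
Proof.
  intros Hc Ht.
  assert (Hln2 : 0 < ln 2) by (rewrite <- ln_1; apply ln_increasing; lra).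
  assert (Hlnc : ln c <= 0)
    by (destruct (proj2 Hc) as [Hlt|Heq];
        [left; rewrite <- ln_1; apply ln_increasing; lra | rewrite Heq, ln_1; lra]).
  assert (Hlnt : ln 2 <= ln t)
    by (destruct Ht as [Hlt|Heq]; [left; apply ln_increasing; lra | rewrite Heq; lra]).
  unfold Rpower. rewrite <- (exp_ln c) at 2 by lra. apply exp_le_compat.
  replace (ln c) with (ln c / ln 2 * ln 2) at 2 by (field; lra).
  apply Rmult_le_compat_neg_l; [|exact Hlnt].
  unfold Rdiv. pose proof (Rinv_0_lt_compat _ Hln2). nra.
Qed.

Lemma dcoef_lower_bound (e : nat -> nat) (a1 q : R) :
  0 < a1 -> 0 < q ->
  (forall k : nat, (1 <= k)%nat -> a1 * q ^ k / INR k <= INR (e k)) ->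
  forall n, Rpower (INR n + 1) (ln (Rmin a1 1) / ln 2 - 1) * q ^ n <= INR (dcoef e n).
Proof.
  intros Ha1 Hq He [|m].
  - simpl. rewrite Rplus_0_l. unfold Rpower. rewrite ln_1, Rmult_0_r, exp_0. lra.
  - set (n := S m).
    assert (Hn : 1 <= INR n) by (apply (le_INR 1); unfold n; lia).
    assert (Hmin : 0 < Rmin a1 1 <= 1)
      by (split; [apply Rmin_glb_lt | apply Rmin_r]; lra).
    assert (Hqn : 0 < q ^ n) by (apply pow_lt; exact Hq).
    unfold Rminus. rewrite Rpower_plus, Rpower_Ropp, Rpower_1 by lra.
    apply Rle_trans with (a1 * q ^ n / INR n).
    + replace (a1 * q ^ n / INR n) with (a1 * / INR n * q ^ n) by (field; lra).
      apply Rmult_le_compat_r; [lra|].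
      apply Rmult_le_compat.
      * left; apply exp_pos.
      * left; apply Rinv_0_lt_compat; lra.
      * apply Rle_trans with (Rmin a1 1); [|apply Rmin_l].
        apply Rpower_le_log2_exponent; lra.
      * apply Rinv_le_contravar; lra.
    + apply Rle_trans with (INR (e n)); [apply He; unfold n; lia|].
      apply le_INR, e_le_dcoef. unfold n; lia.
Qed.

Theorem proposition2p2 :
  exists A1 A2 : R -> R,
    forall (a1 a2 q : R) (e : nat -> nat),
      0 < a1 -> a1 <= a2 -> 2 <= q ->
      (forall n : nat, (1 <= n)%nat ->
         a1 * q ^ n / INR n <= INR (e n) <= a2 * q ^ n / INR n) ->
      forall n : nat,
        Rpower (INR n + 1) (A1 a1) * q ^ n <= INR (dcoef e n) <=
        Rpower (INR n + 1) (A2 a2) * q ^ n.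
Proof.
  exists (fun a => ln (Rmin a 1) / ln 2 - 1), (fun a => 4 * a).
  intros a1 a2 q e Ha1 Ha12 Hq He n. split.
  - apply dcoef_lower_bound; [exact Ha1 | lra | intros k Hk; apply He, Hk].
  - apply dcoef_upper_bound; [lra | exact Hq | intros k Hk; apply He, Hk].
Qed.
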